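(* Let $S=\{\rho_1=0<\rho_2<\cdots\}$ be an Arf numerical semigroup with conductor $c=\rho_r$. Let $d$ be an odd integer with $1\le d\le 2r-3$, write $d=2t+1$, and put $p_t=c+\rho_{t+1}-1$. Then $$\{\rho\in S:\ \#A[\rho]<d\}\subseteq[0,p_t]\cap S.$$
   Context: A numerical semigroup is a submonoid $S$ of $(\mathbb{N}_0,+)$ with finite complement, with elements listed increasingly. $S$ is Arf if $\rho_i+\rho_j-\rho_k\in S$ for all positive integers $i\ge j\ge k$. The conductor $c$ is the smallest integer such that all integers $\ge c$ lie in $S$, with $c=\rho_r$. For $\rho\in S$, $A[\rho]=\{p\in S:\ \rho-p\in S\}$. *)

From mathcomp Require Import all_boot.
Set Implicit Arguments. Unset Strict Implicit. Unset Printing Implicit Defensive.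

Definition numerical_semigroup (S : pred nat) : Prop :=
  [/\ S 0, (forall a b, S a -> S b -> S (a + b)) &
      exists N, forall n, N <= n -> S n].

(* rho is the increasing enumeration of S, 1-indexed: rho i is the element
   of S having exactly i-1 elements of S below it (rho 1 = 0 < rho 2 < ...). *)
Definition is_enumeration (S : pred nat) (rho : nat -> nat) : Prop :=
  forall i, 1 <= i -> S (rho i) /\ count S (iota 0 (rho i)) = i.-1.

Definition Arf (S : pred nat) (rho : nat -> nat) : Prop :=
  forall i j k, 1 <= k -> k <= j -> j <= i -> S (rho i + rho j - rho k).

Definition is_conductor (S : pred nat) (c : nat) : Prop :=
  (forall n, c <= n -> S n) /\
  (forall c', (forall n, c' <= n -> S n) -> c <= c').

(* #A[x] where A[x] = {p in S : x - p in S} (necessarily p <= x) *)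
Definition cardA (S : pred nat) (x : nat) : nat :=
  count (fun p => S p && S (x - p)) (iota 0 x.+1).

From mathcomp Require Import all_boot zify.

Set Implicit Arguments.
Unset Strict Implicit.
Unset Printing Implicit Defensive.

(* Put k := rho_(t+1), the (t+1)-st element of S.  Since
   t + 1 < r we have k < c.  If x >= c + k, then for each of the t + 1
   elements p <= k of S both p and x - p lie in A[x], because x - p >= c.
   The elements p <= k and x - p >= c > k are distinct, so #A[x] >= 2t + 2. *)

Lemma map_subn_iota0 n : map (subn n) (iota 0 n.+1) = rev (iota 0 n.+1).
Proof.
elim: n => [|n IHn] //.
rewrite -[in RHS]addn1 iotaD rev_cat -IHn.
change (iota 0 n.+2) with (0 :: iota (1 + 0) n.+1).
rewrite iotaDl map_cons -map_comp subn0 add0n.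
by congr (_ :: _); apply: eq_map => i /=; rewrite subSS.
Qed.

Lemma count_iota0_reflect (P : pred nat) n :
  count (fun p => P (n - p)) (iota 0 n.+1) = count P (iota 0 n.+1).
Proof. by rewrite -[RHS]count_rev -map_subn_iota0 count_map. Qed.

Lemma count_iota0_mono (P : pred nat) m n :
  m <= n -> count P (iota 0 m) <= count P (iota 0 n).
Proof. by move=> le_mn; rewrite -(subnKC le_mn) iotaD count_cat leq_addr. Qed.

Section Enumeration.

Variables (S : pred nat) (rho : nat -> nat).
Hypothesis rhoE : is_enumeration S rho.

Lemma enumeration_lt i j : 0 < i < j -> rho i < rho j.
Proof.
case/andP=> i_gt0 lt_ij; rewrite ltnNge; apply/negP => le_ji.
have [_ cnt_i] := rhoE i_gt0.
have [_ cnt_j] := rhoE (ltn_trans i_gt0 lt_ij).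
have := count_iota0_mono S le_ji; rewrite cnt_i cnt_j; lia.
Qed.

Lemma count_le_enumeration i n : 0 < i -> rho i < n ->
  count [pred p | S p && (p <= rho i)] (iota 0 n) = i.
Proof.
move=> i_gt0 lt_n; have [S_rho cnt_i] := rhoE i_gt0.
have := filter_iota_leq 0 lt_n; rewrite add0n => filterE.
rewrite -count_filter filterE -addn1 iotaD count_cat cnt_i /= S_rho; lia.
Qed.

End Enumeration.

Lemma twice_count_le_cardA (S : pred nat) c k x :
  (forall n, c <= n -> S n) -> k < c -> c + k <= x ->
  2 * count [pred p | S p && (p <= k)] (iota 0 x.+1) <= cardA S x.
Proof.
move=> S_ge_c lt_kc le_x.
set small := [pred p | S p && (p <= k)].
set mirror := fun p => small (x - p).
have count_mirror : count mirror (iota 0 x.+1) = count small (iota 0 x.+1).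
  exact: count_iota0_reflect.
have disjoint : count (predI small mirror) (iota 0 x.+1) = 0.
  rewrite (@eq_count _ _ pred0) ?count_pred0 // => p /=.
  by apply/negbTE/andP => -[/andP[_ le_pk] /andP[_ le_xpk]]; lia.
have sub_A : count (predU small mirror) (iota 0 x.+1) <= cardA S x.
  apply: sub_count => p /orP[/andP[S_p le_pk] | /andP[S_xp le_xpk]].
    by rewrite /= S_p S_ge_c //; lia.
  by rewrite /= S_xp andbT S_ge_c //; lia.
have := count_predUI small mirror (iota 0 x.+1).
rewrite disjoint count_mirror; lia.
Qed.

Theorem mainTheorem13 (S : pred nat) (rho : nat -> nat) (r t : nat) :
  numerical_semigroup S ->
  is_enumeration S rho ->
  Arf S rho ->
  1 <= r ->
  is_conductor S (rho r) ->
  2 * t + 1 <= 2 * r - 3 ->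
  forall x : nat, S x -> cardA S x < 2 * t + 1 ->
    (x <= rho r + rho t.+1 - 1) && S x.
Proof.
move=> _ rhoE _ _ [S_ge_c _] t_lt x S_x small_cardA.
rewrite S_x andbT leqNgt; apply/negP => large_x.
have lt_kc : rho t.+1 < rho r by apply: (enumeration_lt rhoE); lia.
have := twice_count_le_cardA S_ge_c lt_kc (_ : rho r + rho t.+1 <= x).
rewrite (count_le_enumeration rhoE) //; lia.
Qed.
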